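(* Let $\mathcal{H}$ be a real Hilbert space, $f:\mathcal{H}\to\mathbb{R}$ $\mu$-strongly convex and $L$-smooth with $0<\mu<L<\infty$, $g:\mathcal{H}\to\mathbb{R}\cup\{+\infty\}$ convex, proper and lower semicontinuous, $q=\mu/L$, and $x^\star$ the unique minimizer of $f+g$. Let the Prox-ITEM iterates and the quantities $\mathcal{V}_k$ be as defined in the context. Then $\mathcal{V}_{k+1}\le\mathcal{V}_k$ for every $k\in\mathbb{N}_0$.
   Context: $\operatorname{Prox}^{\gamma}_g(x)=\operatorname{argmin}_z\big(g(z)+\frac{1}{2\gamma}\|x-z\|^2\big)$. Prox-ITEM from $x^0\in\mathcal{H}$: $A_0=0$, $z^0=x^0$, and for $k\ge0$: $A_{k+1}=\frac{(1+q)A_k+2(1+\sqrt{(1+A_k)(1+qA_k)})}{(1-q)^2}$, $\beta_k=\frac{A_k}{(1-q)A_{k+1}}$, $\delta_k=\sqrt{\frac{A_{k+1}}{1+qA_{k+1}}}$, $y^k=(1-\beta_k)z^k+\beta_kx^k$, $\bar z^{k+1}=(1-q\delta_k)z^k+q\delta_ky^k-\frac{\delta_k}{L}\nabla f(y^k)$, $z^{k+1}=\operatorname{Prox}^{\delta_k/L}_g(\bar z^{k+1})$, $x^{k+1}=y^k-\frac1L\nabla f(y^k)-\frac1{\delta_k}(\bar z^{k+1}-z^{k+1})$. Define $\mathcal{I}_f(x,y)=f(x)-f(y)-\langle\nabla f(y),x-y\rangle-\frac{\mu}{2}\|x-y\|^2-\frac{1}{2(L-\mu)}\|\nabla f(x)-\nabla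 f(y)-\mu(x-y)\|^2$ and $\mathcal{I}_g(x,y,s)=g(x)-g(y)-\langle s,x-y\rangle$. Let $s_g^k=L\delta_{k-1}^{-1}(\bar z^k-z^k)$ for $k\ge1$ (so $s_g^k\in\partial g(z^k)$), $s_g^\star=-\nabla f(x^\star)$, and $\sigma_k=\sqrt{(1+A_k)(1+qA_k)}$. For $k\in\mathbb{N}_0$, $$\mathcal{V}_k=(1-q)A_k\mathcal{I}_f(y^{k-1},x^\star)+qA_k\mathcal{I}_g(x^\star,z^k,s_g^k)+(qA_k+1-\sigma_k)\mathcal{I}_g(z^k,x^\star,s_g^\star)+\frac{A_k}{2L}\|s_g^k-s_g^\star\|^2+(L+\mu A_k)\|z^k-x^\star\|^2,$$ with the conventions $y^{-1}=y^0$, $s_g^0=s_g^1$, $0\cdot(\pm\infty)=0$. *)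

From mathcomp Require Import all_boot all_order all_algebra.
From mathcomp Require Import reals constructive_ereal.

Set Implicit Arguments.
Unset Strict Implicit.
Unset Printing Implicit Defensive.

Import Order.TTheory GRing.Theory Num.Theory.
Local Open Scope ring_scope.

Section Hilbert.
Variables (R : realType) (V : lmodType R).

Definition is_inner_product (ip : V -> V -> R) : Prop :=
  [/\ (forall x y, ip x y = ip y x),
      (forall a x y z, ip (a *: x + y) z = a * ip x z + ip y z),
      (forall x, 0 <= ip x x) &
      (forall x, ip x x = 0 -> x = 0)].

Definition hnorm (ip : V -> V -> R) (x : V) : R := Num.sqrt (ip x x).
Definition nsq (ip : V -> V -> R) (x : V) : R := ip x x.

Definition is_hilbert (ip : V -> V -> R) : Prop :=
  is_inner_product ip /\
  forall u : nat -> V,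
    (forall e : R, 0 < e -> exists N : nat, forall m n : nat,
        (N <= m)%N -> (N <= n)%N -> hnorm ip (u m - u n) < e) ->
    exists l : V, forall e : R, 0 < e -> exists N : nat, forall n : nat,
        (N <= n)%N -> hnorm ip (u n - l) < e.

Definition is_gradient (ip : V -> V -> R) (f : V -> R) (gradf : V -> V) : Prop :=
  forall x : V, forall e : R, 0 < e -> exists d : R, 0 < d /\
    forall h : V, hnorm ip h < d ->
      `| f (x + h) - f x - ip (gradf x) h | <= e * hnorm ip h.

Definition strongly_convex (ip : V -> V -> R) (mu : R) (f : V -> R) : Prop :=
  forall (x y : V) (l : R), 0 <= l <= 1 ->
    f (l *: x + (1 - l) *: y) <=
      l * f x + (1 - l) * f y - mu / 2 * l * (1 - l) * nsq ip (x - y).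

Definition L_smooth (ip : V -> V -> R) (L : R) (f : V -> R) (gradf : V -> V) : Prop :=
  is_gradient ip f gradf /\
  forall x y : V, hnorm ip (gradf x - gradf y) <= L * hnorm ip (x - y).

Local Open Scope ereal_scope.

Definition econvex (g : V -> \bar R) : Prop :=
  forall (x y : V) (l : R), (0 <= l <= 1)%R ->
    g (l *: x + (1 - l) *: y)%R <= l%:E * g x + (1 - l)%R%:E * g y.

Definition eproper (g : V -> \bar R) : Prop :=
  (forall x, g x != -oo) /\ (exists x, g x < +oo).

Definition elsc (ip : V -> V -> R) (g : V -> \bar R) : Prop :=
  forall (x : V) (t : \bar R), t < g x ->
    exists d : R, (0 < d)%R /\ forall y : V, (hnorm ip (y - x) < d)%R -> t < g y.

Definition is_prox (ip : V -> V -> R) (g : V -> \bar R) (gam : R) (x z : V) : Prop :=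
  forall w : V,
    g z + (1 / (2 * gam) * nsq ip (x - z))%:E <= g w + (1 / (2 * gam) * nsq ip (x - w))%:E.

Local Close Scope ereal_scope.

Definition If (ip : V -> V -> R) (mu L : R) (f : V -> R) (gradf : V -> V) (x y : V) : R :=
  f x - f y - ip (gradf y) (x - y) - mu / 2 * nsq ip (x - y)
  - 1 / (2 * (L - mu)) * nsq ip (gradf x - gradf y - mu *: (x - y)).

Definition Ig (ip : V -> V -> R) (g : V -> \bar R) (x y s : V) : \bar R :=
  (g x - g y - (ip s (x - y))%:E)%E.

End Hilbert.

Section Seq.
Variable R : realType.
Local Open Scope ring_scope.

Fixpoint Aseq (q : R) (k : nat) : R :=
  match k with
  | 0 => 0
  | k'.+1 =>
      let a := Aseq q k' in
      ((1 + q) * a + 2 * (1 + Num.sqrt ((1 + a) * (1 + q * a)))) / (1 - q) ^+ 2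
  end.

Definition beta (q : R) (k : nat) : R := Aseq q k / ((1 - q) * Aseq q k.+1).
Definition delta (q : R) (k : nat) : R :=
  Num.sqrt (Aseq q k.+1 / (1 + q * Aseq q k.+1)).
Definition sigma (q : R) (k : nat) : R :=
  Num.sqrt ((1 + Aseq q k) * (1 + q * Aseq q k)).
End Seq.

Section Lyap.
Variables (R : realType) (V : lmodType R).
Local Open Scope ring_scope.

(* s_g^k = L delta_{k-1}^{-1} (zbar^k - z^k) for k >= 1, and s_g^0 = s_g^1 *)
Definition sg (q L : R) (zbar z : nat -> V) (k : nat) : V :=
  let k' := maxn k 1 in (L / delta q k'.-1) *: (zbar k' - z k').

(* y^{k-1} with the convention y^{-1} = y^0 *)
Definition yprev (y : nat -> V) (k : nat) : V := y k.-1.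

(* the Lyapunov quantity V_k (extended real; 0 * (+-oo) = 0 in mathcomp) *)
Definition Vk (ip : V -> V -> R) (mu L : R) (f : V -> R) (gradf : V -> V)
    (g : V -> \bar R) (xstar : V) (zbar z y : nat -> V) (k : nat) : \bar R :=
  let q := mu / L in
  let A := Aseq q k in
  let s := sg q L zbar z k in
  let sstar := - gradf xstar in
  (((1 - q) * A * If ip mu L f gradf (yprev y k) xstar)%:E
   + (q * A)%:E * Ig ip g xstar (z k) s
   + (q * A + 1 - sigma q k)%:E * Ig ip g (z k) xstar sstar
   + (A / (2 * L) * nsq ip (s - sstar))%:E
   + ((L + mu * A) * nsq ip (z k - xstar))%:E)%E.
End Lyap.

(* With q = mu/L, a = sqrt (1 + A_k) and b = sqrt (1 + q A_k) one has sigma_k = a b,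
   A_{k+1} = (a + b)^2 / (1 - q)^2 and delta_k = (a + b) / (q a + b).  After these
   substitutions, and writing s^k for s_g^k, V_{k+1} - V_k plus
     (1 - q) A_k I_f(y^{k-1}, y^k) + (1 - q) (A_{k+1} - A_k) I_f(x_star, y^k)
     + (sigma_k - 1) I_g(z^{k+1}, z^k, s^k)
     + (sigma_{k+1} - sigma_k + A_{k+1} - A_k) I_g(z^{k+1}, x_star, s_star)
     + (A_{k+1} - A_k) I_g(x_star, z^{k+1}, s^{k+1})
   is identically equal to
     - A_k / (2L) ||s^{k+1} - s^k||^2 - (A_{k+1} - A_k) / (2L) ||s^{k+1} - s_star||^2,
   an identity between inner products of finitely many vectors.  The weights are
   nonnegative because A_k and sigma_k increase and sigma_k >= 1.  I_f >= 0 is the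
   interpolation inequality for mu-strongly convex L-smooth f, and the I_g terms are
   subgradient inequalities: the prox step puts s^j in the subdifferential of g at
   z^j, and optimality of x_star puts s_star = - grad f(x_star) in it at x_star.
   The descent lemma behind I_f >= 0 is proved without integration: bisecting the
   step shows that f exceeds its linearization by at most
   (L/2 + L/2^(n+1)) ||d||^2, for every n. *)

From mathcomp Require Import all_boot all_order all_algebra.
From mathcomp Require Import reals constructive_ereal.
From mathcomp Require Import ring lra.
Import Order.TTheory GRing.Theory Num.Theory.
Local Open Scope ring_scope.
Set Implicit Arguments.
Unset Strict Implicit.

Section InnerProduct.
Variables (R : realType) (V : lmodType R) (ip : V -> V -> R).
Hypothesis ip_inner : is_inner_product ip.

Lemma ipC x y : ip x y = ip y x.
Proof. by case: ip_inner. Qed.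

Lemma ipDl x y z : ip (x + y) z = ip x z + ip y z.
Proof. by case: ip_inner => _ lin _ _; have := lin 1 x y z; rewrite scale1r mul1r. Qed.

Lemma ip0l z : ip 0 z = 0.
Proof. by have := ipDl 0 0 z; rewrite addr0 -{1}[ip 0 z]addr0 => /addrI <-. Qed.

Lemma ipZl a x z : ip (a *: x) z = a * ip x z.
Proof.
by case: ip_inner => _ lin _ _; have := lin a x 0 z; rewrite addr0 ip0l addr0.
Qed.

Lemma ipNl x z : ip (- x) z = - ip x z.
Proof. by rewrite -scaleN1r ipZl mulN1r. Qed.

Lemma ipBl x y z : ip (x - y) z = ip x z - ip y z.
Proof. by rewrite ipDl ipNl. Qed.

Lemma ipDr x y z : ip z (x + y) = ip z x + ip z y.
Proof. by rewrite ipC ipDl !(ipC z). Qed.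

Lemma ipZr a x z : ip z (a *: x) = a * ip z x.
Proof. by rewrite ipC ipZl ipC. Qed.

Lemma ipNr x z : ip z (- x) = - ip z x.
Proof. by rewrite ipC ipNl ipC. Qed.

Lemma ip0r x : ip x 0 = 0.
Proof. by rewrite ipC ip0l. Qed.

Lemma nsq_ge0 x : 0 <= nsq ip x.
Proof. by rewrite /nsq; case: ip_inner. Qed.

Lemma nsq_eq0 x : nsq ip x = 0 -> x = 0.
Proof. by case: ip_inner => _ _ _; apply. Qed.

Lemma nsqZ t x : nsq ip (t *: x) = t ^+ 2 * nsq ip x.
Proof. by rewrite /nsq ipZl ipZr mulrA -expr2. Qed.

Lemma hnorm_ge0 x : 0 <= hnorm ip x.
Proof. exact: sqrtr_ge0. Qed.

Lemma hnorm_sqr x : hnorm ip x ^+ 2 = nsq ip x.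
Proof. by rewrite /hnorm sqr_sqrtr // nsq_ge0. Qed.

Lemma hnormZ t x : hnorm ip (t *: x) = `|t| * hnorm ip x.
Proof. by rewrite /hnorm -/(nsq ip _) nsqZ sqrtrM ?sqrtr_sqr // sqr_ge0. Qed.

Lemma cauchy_schwarz x y : ip x y <= hnorm ip x * hnorm ip y.
Proof.
have sq_le : ip x y ^+ 2 <= nsq ip x * nsq ip y.
  have [y0|y_neq0] := eqVneq (nsq ip y) 0.
    by rewrite (nsq_eq0 y0) ip0r /nsq ip0r expr2 !mulr0.
  have y_gt0 : 0 < nsq ip y by rewrite lt_def y_neq0 nsq_ge0.
  have := nsq_ge0 (nsq ip y *: x - ip x y *: y).
  rewrite /nsq !(ipDl, ipDr, ipNl, ipNr, ipZl, ipZr) (ipC y x) -!/(nsq ip _).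
  nra.
apply: le_trans (ler_norm _) _.
by rewrite -sqrtr_sqr /hnorm -sqrtrM ?nsq_ge0 // ler_sqrt // mulr_ge0 // nsq_ge0.
Qed.

End InnerProduct.

Section GramExpansion.
Variables (R : realType) (V : lmodType R) (ip : V -> V -> R).
Hypothesis ip_inner : is_inner_product ip.

Inductive vterm :=
  | VAtom of nat | VAdd of vterm & vterm | VOpp of vterm | VScale of R & vterm | VZero.

Fixpoint vterm_eval (atoms : seq V) (t : vterm) : V :=
  match t with
  | VAtom i => nth 0 atoms i
  | VAdd t1 t2 => vterm_eval atoms t1 + vterm_eval atoms t2
  | VOpp t1 => - vterm_eval atoms t1
  | VScale r t1 => r *: vterm_eval atoms t1
  | VZero => 0
  end.

Definition gram (atoms : seq V) (i j : nat) : R :=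
  if Nat.leb i j then ip (nth 0 atoms i) (nth 0 atoms j)
  else ip (nth 0 atoms j) (nth 0 atoms i).

Fixpoint ip_atom_vterm (atoms : seq V) (i : nat) (t : vterm) : R :=
  match t with
  | VAtom j => gram atoms i j
  | VAdd t1 t2 => ip_atom_vterm atoms i t1 + ip_atom_vterm atoms i t2
  | VOpp t1 => - ip_atom_vterm atoms i t1
  | VScale r t1 => r * ip_atom_vterm atoms i t1
  | VZero => 0
  end.

Fixpoint ip_vterm (atoms : seq V) (t1 t2 : vterm) : R :=
  match t1 with
  | VAtom i => ip_atom_vterm atoms i t2
  | VAdd t t' => ip_vterm atoms t t2 + ip_vterm atoms t' t2
  | VOpp t => - ip_vterm atoms t t2
  | VScale r t => r * ip_vterm atoms t t2
  | VZero => 0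
  end.

Lemma ip_atom_vtermE atoms i t :
  ip (nth 0 atoms i) (vterm_eval atoms t) = ip_atom_vterm atoms i t.
Proof.
elim: t => [j|t1 IH1 t2 IH2|t1 IH|r t1 IH|] /=.
- by rewrite /gram; case: Nat.leb; last exact: ipC.
- by rewrite ipDr // IH1 IH2.
- by rewrite ipNr // IH.
- by rewrite ipZr // IH.
- exact: ip0r.
Qed.

Lemma ip_vtermE atoms t1 t2 :
  ip (vterm_eval atoms t1) (vterm_eval atoms t2) = ip_vterm atoms t1 t2.
Proof.
elim: t1 => [i|t IH t' IH'|t IH|r t IH|] /=.
- exact: ip_atom_vtermE.
- by rewrite ipDl // IH IH'.
- by rewrite ipNl // IH.
- by rewrite ipZl // IH.
- exact: ip0l.
Qed.

End GramExpansion.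

Ltac reify_vterm R atoms t :=
  lazymatch t with
  | @GRing.add _ ?u ?v =>
      let eu := reify_vterm R atoms u in let ev := reify_vterm R atoms v in
      constr:(VAdd eu ev)
  | @GRing.opp _ ?u => let eu := reify_vterm R atoms u in constr:(VOpp eu)
  | @GRing.scale _ _ ?r ?u => let eu := reify_vterm R atoms u in constr:(VScale r eu)
  | @GRing.zero _ => constr:(@VZero R)
  | _ =>
      let rec find l n :=
        lazymatch l with
        | (t :: _)%SEQ => constr:(@VAtom R n)
        | (_ :: ?l')%SEQ => find l' (S n)
        | _ => fail "gram_expand: unknown atom" t
        end in
      find atoms O
  end.

(* Rewrites every [ip u v], for [u] and [v] linear combinations of [atoms], into
   its bilinear expansion in the Gram entries [ip a_i a_j] (i <= j), so that
   identities between inner products become identities that [field] can check. *)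
Ltac gram_expand R ip ip_inner atoms :=
  repeat match goal with
  | |- context [ip ?u ?v] =>
      let eu := reify_vterm R atoms u in let ev := reify_vterm R atoms v in
      rewrite (ip_vtermE ip_inner atoms eu ev)
  end;
  cbv beta iota zeta delta [ip_vterm ip_atom_vterm gram Nat.leb nth].

Lemma le0_of_le_small (R : realFieldType) (x c : R) :
  (forall t, 0 < t -> t <= 1 -> x <= t * c) -> x <= 0.
Proof.
move=> small; rewrite leNgt; apply/negP => x_gt0.
have [c_le0|c_gt0] := lerP c 0.
  by have := small 1 ltr01 (lexx 1); lra.
have xc_gt0 : 0 < x + c by lra.
have t_gt0 : 0 < x / (x + c) by exact: divr_gt0.
have t_le1 : x / (x + c) <= 1 by rewrite ler_pdivrMr //; lra.
have := small _ t_gt0 t_le1.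
rewrite mulrAC ler_pdivlMr //; nra.
Qed.

Lemma le0_of_le_dyadic (R : archiRealFieldType) (x c : R) :
  (forall n : nat, x <= c / 2 ^+ n.+1) -> x <= 0.
Proof.
move=> small; apply: (@le0_of_le_small _ x `|c|) => t t_gt0 t_le1.
have [n n_gt] : exists n : nat, t^-1 < n%:R.
  by exists (Num.bound (t^-1)); apply: archi_boundP; rewrite invr_ge0 ltW.
have pow_ge : (n%:R : R) <= 2 ^+ n.+1.
  rewrite -natrX ler_nat; apply: ltnW; apply: ltnW; exact: ltn_expl.
have pow_gt0 : (0 : R) < 2 ^+ n.+1 by exact: exprn_gt0.
have tpow_gt1 : 1 < t * 2 ^+ n.+1.
  have : t * t^-1 < t * 2 ^+ n.+1 by rewrite ltr_pM2l //; exact: lt_le_trans pow_ge.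
  by rewrite mulfV // lt0r_neq0.
apply: le_trans (small n) _; rewrite ler_pdivrMr //.
have := ler_norm c; have := normr_ge0 c; nra.
Qed.

Definition Ig_fin (R : realType) (V : lmodType R) (ip : V -> V -> R) (h : V -> R)
    (x y s : V) : R :=
  h x - h y - ip s (x - y).

Lemma IgE (R : realType) (V : lmodType R) (ip : V -> V -> R) (g : V -> \bar R) x y s :
  g x \is a fin_num -> g y \is a fin_num ->
  Ig ip g x y s = (Ig_fin ip (fine \o g) x y s)%:E.
Proof. by move=> /fineK gx /fineK gy; rewrite /Ig -gx -gy. Qed.

Lemma convex_comb_shift (R : pzRingType) (V : lmodType R) (t : R) (w z : V) :
  t *: w + (1 - t) *: z = z + t *: (w - z).
Proof. by rewrite scalerBr scalerBl scale1r addrCA. Qed.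

Section Subgradients.
Variables (R : realType) (V : lmodType R) (ip : V -> V -> R).
Hypothesis ip_inner : is_inner_product ip.

Lemma prox_subgrad (g : V -> \bar R) gam zb z w :
  econvex g -> 0 < gam -> is_prox ip g gam zb z ->
  g z \is a fin_num -> g w \is a fin_num ->
  0 <= Ig_fin ip (fine \o g) w z (gam^-1 *: (zb - z)).
Proof.
move=> g_cvx gam_gt0 prox /fineK gz /fineK gw; rewrite /Ig_fin /=.
move: (fine (g z)) (fine (g w)) gz gw => gz gw egz egw.
suff : gz - gw + ip (gam^-1 *: (zb - z)) (w - z) <= 0 by lra.
apply: (le0_of_le_small (c := (2 * gam)^-1 * nsq ip (w - z))) => t t_gt0 t_le1.
have t01 : 0 <= t <= 1 by rewrite (ltW t_gt0) t_le1.
have := le_trans (prox _) (leeD2r _ (g_cvx w z t t01)).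
rewrite -egz -egw -!EFinM -!EFinD lee_fin convex_comb_shift => prox_t.
rewrite -(ler_pM2l t_gt0); move: prox_t; rewrite /nsq mul1r.
gram_expand R ip ip_inner [:: zb; z; w].
lra.
Qed.
End Subgradients.

Section Gradient.
Variables (R : realType) (V : lmodType R) (ip : V -> V -> R).
Hypothesis ip_inner : is_inner_product ip.
Variables (f : V -> R) (gradf : V -> V).
Hypothesis f_grad : is_gradient ip f gradf.

Lemma gradient_directional_lb x d e : 0 < e ->
  exists2 t0, 0 < t0 & forall t, 0 < t -> t <= t0 ->
    f x + t * ip (gradf x) d - e * (t * hnorm ip d) <= f (x + t *: d).
Proof.
move=> e_gt0; have [del [del_gt0 near_x]] := f_grad x e_gt0.
have nd_ge0 := hnorm_ge0 ip d.
exists (del / (hnorm ip d + 1)) => [|t t_gt0]; first by apply: divr_gt0; lra.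
rewrite ler_pdivlMr; last lra.
move=> t_small; have td_small : hnorm ip (t *: d) < del.
  by rewrite hnormZ // gtr0_norm //; nra.
have := near_x _ td_small; rewrite ler_norml => /andP [lb _].
by move: lb; rewrite ipZr // hnormZ // gtr0_norm //; lra.
Qed.
End Gradient.

Section SmoothStronglyConvex.
Variables (R : realType) (V : lmodType R) (ip : V -> V -> R).
Hypothesis ip_inner : is_inner_product ip.
Variables (mu L : R) (f : V -> R) (gradf : V -> V).
Hypotheses (mu_gt0 : 0 < mu) (mu_lt_L : mu < L).
Hypothesis f_sc : strongly_convex ip mu f.
Hypothesis f_smooth : L_smooth ip L f gradf.

Lemma strongly_convex_grad_lb u v :
  f v + ip (gradf v) (u - v) + mu / 2 * nsq ip (u - v) <= f u.
Proof.
set d := u - v; have nd_ge0 := hnorm_ge0 ip d; have n2_ge0 := nsq_ge0 ip_inner d.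
rewrite -subr_le0.
apply: (le0_of_le_small (c := hnorm ip d + mu / 2 * nsq ip d)) => e e_gt0 e_le1.
have [t0 t0_gt0 grad_lb] := gradient_directional_lb ip_inner f_smooth.1 v d e_gt0.
pose t := Num.min e t0.
have t_gt0 : 0 < t by rewrite lt_min e_gt0 t0_gt0.
have t_le_e : t <= e by rewrite ge_min lexx.
have t01 : 0 <= t <= 1 by rewrite (ltW t_gt0) (le_trans t_le_e).
have t_le_t0 : t <= t0 by rewrite ge_min lexx orbT.
have := grad_lb t t_gt0 t_le_t0.
have := f_sc u v t01; rewrite convex_comb_shift -/d => cvx lb.
rewrite -(ler_pM2l t_gt0).
have : t * (t * (mu / 2 * nsq ip d)) <= t * (e * (mu / 2 * nsq ip d)).
  by rewrite ler_pM2l // ler_wpM2r // mulr_ge0 // divr_ge0 // ltW.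
nra.
Qed.

Lemma ip_grad_incr_le v d : ip (gradf (v + d) - gradf v) d <= L * nsq ip d.
Proof.
apply: le_trans (cauchy_schwarz ip_inner _ _) _.
rewrite -hnorm_sqr // expr2 mulrA ler_wpM2r ?hnorm_ge0 //.
by have := f_smooth.2 (v + d) v; rewrite addrAC subrr add0r.
Qed.

Definition taylor_gap v d := f (v + d) - f v - ip (gradf v) d.

Lemma taylor_gap_le v d : taylor_gap v d <= L * nsq ip d.
Proof.
have := strongly_convex_grad_lb v (v + d).
rewrite opprD addrA subrr add0r -scaleN1r nsqZ // ipZr // => sc_lb.
have := ip_grad_incr_le v d; rewrite ipBl //.
have : 0 <= mu / 2 * nsq ip d by rewrite mulr_ge0 ?nsq_ge0 // divr_ge0 // ltW.
rewrite /taylor_gap; lra.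
Qed.

Lemma taylor_gap_double v h :
  taylor_gap v (h + h) =
  taylor_gap (v + h) h + taylor_gap v h + ip (gradf (v + h) - gradf v) h.
Proof. by rewrite /taylor_gap addrA ipDr // ipBl //; ring. Qed.

Lemma taylor_gap_le_dyadic n v d :
  taylor_gap v d <= (L / 2 + L / 2 ^+ n.+1) * nsq ip d.
Proof.
elim: n v d => [|n IH] v d; first by rewrite expr1 -splitr; exact: taylor_gap_le.
have half : 2^-1 + 2^-1 = 1 :> R by field.
have d_halves : d = 2^-1 *: d + 2^-1 *: d by rewrite -scalerDl half scale1r.
rewrite {1}d_halves taylor_gap_double.
apply: le_trans (lerD (lerD (IH _ _) (IH _ _)) (ip_grad_incr_le _ _)) _.
rewrite nsqZ // le_eqVlt; apply/orP; left; apply/eqP.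
have : (0 : R) < 2 ^+ n.+1 by exact: exprn_gt0.
by rewrite [2 ^+ n.+2]exprS; move: (2 ^+ n.+1) => P /lt0r_neq0 P_neq0; field.
Qed.

Lemma descent_lemma u v :
  f u <= f v + ip (gradf v) (u - v) + L / 2 * nsq ip (u - v).
Proof.
suff : taylor_gap v (u - v) - L / 2 * nsq ip (u - v) <= 0.
  by rewrite /taylor_gap subrKC; lra.
apply: (le0_of_le_dyadic (c := L * nsq ip (u - v))) => n.
have := taylor_gap_le_dyadic n v (u - v); rewrite mulrAC; lra.
Qed.

Lemma If_ge0 x y : 0 <= If ip mu L f gradf x y.
Proof.
(* [u] minimizes the difference between the upper quadratic model of [f] at [x]
   and the lower one at [y]; the minimal difference is [If x y]. *)
pose u := x - (L - mu)^-1 *: (gradf x - gradf y - mu *: (x - y)).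
have -> : If ip mu L f gradf x y =
    (f u - (f y + ip (gradf y) (u - y) + mu / 2 * nsq ip (u - y)))
    + (f x + ip (gradf x) (u - x) + L / 2 * nsq ip (u - x) - f u).
  rewrite /If /nsq /u; gram_expand R ip ip_inner [:: x; y; gradf x; gradf y].
  by field; rewrite subr_eq0 gt_eqF.
have := strongly_convex_grad_lb u y; have := descent_lemma u x; lra.
Qed.

Lemma opt_subgrad (g : V -> \bar R) xs w : econvex g ->
  (forall w, ((f xs)%:E + g xs <= (f w)%:E + g w)%E) ->
  g xs \is a fin_num -> g w \is a fin_num ->
  0 <= Ig_fin ip (fine \o g) w xs (- gradf xs).
Proof.
move=> g_cvx xs_min /fineK gxs /fineK gw; rewrite /Ig_fin /= ipNl //.
move: (fine (g xs)) (fine (g w)) gxs gw => gxs gw egxs egw.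
suff : gxs - gw - ip (gradf xs) (w - xs) <= 0 by lra.
apply: (le0_of_le_small (c := L / 2 * nsq ip (w - xs))) => t t_gt0 t_le1.
have t01 : 0 <= t <= 1 by rewrite (ltW t_gt0) t_le1.
have := le_trans (xs_min _) (leeD2l _ (g_cvx w xs t t01)).
rewrite -egxs -egw -!EFinM -!EFinD lee_fin convex_comb_shift => opt.
have := descent_lemma (xs + t *: (w - xs)) xs.
have -> : xs + t *: (w - xs) - xs = t *: (w - xs) by rewrite addrC addKr.
rewrite ipZr // nsqZ // => desc.
rewrite -(ler_pM2l t_gt0); lra.
Qed.
End SmoothStronglyConvex.

Section Momentum.
Variables (R : realType) (q : R).
Hypotheses (q_gt0 : 0 < q) (q_lt1 : q < 1).

(* [lra] and [nra] ignore section hypotheses, hence the [have := q_gt0] steps. *)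

Let a k := Num.sqrt (1 + Aseq q k).
Let b k := Num.sqrt (1 + q * Aseq q k).

Lemma sigma0 : sigma q 0 = 1.
Proof. by rewrite /sigma /= mulr0 addr0 mulr1 sqrtr1. Qed.

Lemma Aseq_ge0 k : 0 <= Aseq q k.
Proof.
elim: k => [|k IH] //=; rewrite divr_ge0 ?sqr_ge0 //.
have := sqrtr_ge0 ((1 + Aseq q k) * (1 + q * Aseq q k)); have := q_gt0; nra.
Qed.

Lemma qAseq_ge0 k : 0 <= q * Aseq q k.
Proof. by rewrite mulr_ge0 ?Aseq_ge0 ?ltW. Qed.

Lemma sigma_ge1 k : 1 <= sigma q k.
Proof.
have := Aseq_ge0 k; have := qAseq_ge0 k => qA_ge0 A_ge0.
by rewrite /sigma -{1}sqrtr1 ler_sqrt; nra.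
Qed.

Lemma Aseq_leS k : Aseq q k <= Aseq q k.+1.
Proof.
have := Aseq_ge0 k; have := qAseq_ge0 k; have := sigma_ge1 k; have := q_lt1.
rewrite /= -/(sigma q k) ler_pdivlMr; last by rewrite exprn_gt0 // subr_gt0.
nra.
Qed.

Lemma sigma_leS k : sigma q k <= sigma q k.+1.
Proof.
have := Aseq_ge0 k; have := Aseq_leS k => A_le A_ge0.
have qA_le : q * Aseq q k <= q * Aseq q k.+1 by rewrite ler_wpM2l // ltW.
have := qAseq_ge0 k => qA_ge0.
by rewrite /sigma ler_sqrt ?ler_pM; nra.
Qed.

Lemma sqrt_qAseq_ge1 k : 1 <= b k.
Proof. by have := qAseq_ge0 k => qA_ge0; rewrite /b -{1}sqrtr1 ler_sqrt; lra. Qed.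

Lemma sqrt_qAseq_le k : b k <= a k.
Proof.
have qA_le : q * Aseq q k <= Aseq q k by rewrite ler_piMl ?Aseq_ge0 // ltW.
by rewrite /a /b ler_sqrt; have := Aseq_ge0 k; lra.
Qed.

Lemma sigmaE k : sigma q k = a k * b k.
Proof. by rewrite /sigma /a /b sqrtrM // addr_ge0 ?Aseq_ge0. Qed.

Lemma AseqSE k : Aseq q k.+1 = (a k + b k) ^+ 2 / (1 - q) ^+ 2.
Proof.
rewrite /= -/(sigma q k) sigmaE; congr (_ / _).
have := Aseq_ge0 k; have := qAseq_ge0 k => qA_ge0 A_ge0.
by rewrite sqrrD /a /b /= !sqr_sqrtr; [ring | lra | lra].
Qed.

Lemma deltaE k : delta q k = (a k + b k) / (q * a k + b k).
Proof.
have := Aseq_ge0 k; have := qAseq_ge0 k => qA_ge0 A_ge0.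
have a_sqr : a k ^+ 2 = 1 + Aseq q k by rewrite sqr_sqrtr //; lra.
have b_sqr : b k ^+ 2 = 1 + q * Aseq q k by rewrite sqr_sqrtr //; lra.
have a_ge0 : 0 <= a k := sqrtr_ge0 _.
have qab_gt0 : 0 < q * a k + b k by have := sqrt_qAseq_ge1 k; have := q_gt0; nra.
have qab_sqr : (q * a k + b k) ^+ 2 = (1 - q) ^+ 2 + q * (a k + b k) ^+ 2.
  by rewrite !sqrrD !exprMn a_sqr b_sqr; ring.
rewrite /delta AseqSE -[RHS]ger0_norm; last first.
  by apply: divr_ge0; [have := sqrt_qAseq_ge1 k; lra | exact: ltW].
rewrite -sqrtr_sqr; congr Num.sqrt; rewrite expr_div_n qab_sqr.
field; rewrite -qab_sqr; apply/andP; split; apply: lt0r_neq0.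
  exact: exprn_gt0.
by rewrite subr_gt0.
Qed.

Lemma delta_gt0 k : 0 < delta q k.
Proof.
have a_ge0 : 0 <= a k := sqrtr_ge0 _.
have := sqrt_qAseq_ge1 k; have := q_gt0 => q_pos b_ge1.
by rewrite deltaE divr_gt0 //; nra.
Qed.
End Momentum.

Section LyapunovIdentity.
Variables (R : realType) (V : lmodType R) (ip : V -> V -> R).
Hypothesis ip_inner : is_inner_product ip.
Variables (mu L : R) (f : V -> R) (gradf : V -> V) (h : V -> R).

(* [Vk] with the extended-real [g] replaced by a real-valued [h]. *)
Definition lyap (A sig : R) (xs yp z s : V) : R :=
  (1 - mu / L) * A * If ip mu L f gradf yp xs
  + mu / L * A * Ig_fin ip h xs z s
  + (mu / L * A + 1 - sig) * Ig_fin ip h z xs (- gradf xs)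
  + A / (2 * L) * nsq ip (s - - gradf xs)
  + (L + mu * A) * nsq ip (z - xs).

Lemma lyap_step_identity k (xs z yp s sp y z1 : V) :
  0 < mu -> mu < L ->
  let q := mu / L in
  let A := Aseq q k in let A1 := Aseq q k.+1 in
  y = (1 - beta q k) *: z + beta q k *: (yp - L^-1 *: (gradf yp + s)) ->
  z1 = (1 - q * delta q k) *: z + (q * delta q k) *: y
       - (delta q k / L) *: gradf y - (delta q k / L) *: sp ->
  lyap A1 (sigma q k.+1) xs y z1 sp - lyap A (sigma q k) xs yp z s
  + (1 - q) * A * If ip mu L f gradf yp y
  + (1 - q) * (A1 - A) * If ip mu L f gradf xs y
  + (sigma q k - 1) * Ig_fin ip h z1 z s
  + (sigma q k.+1 - sigma q k + A1 - A) * Ig_fin ip h z1 xs (- gradf xs)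
  + (A1 - A) * Ig_fin ip h xs z1 sp
  = - (A / (2 * L)) * nsq ip (sp - s) - ((A1 - A) / (2 * L)) * nsq ip (sp + gradf xs).
Proof.
move=> mu_gt0 mu_lt_L; have L_gt0 : 0 < L by exact: lt_trans mu_lt_L.
have q_gt0 : 0 < mu / L by exact: divr_gt0.
have q_lt1 : mu / L < 1 by rewrite ltr_pdivrMr // mul1r.
cbv zeta; move=> y_def ->.
rewrite /lyap /If /Ig_fin /nsq.
move: (f y) (gradf y) y_def => fy gy ->; rewrite /beta.
gram_expand R ip ip_inner [:: xs; z; yp; gradf yp; s; gradf xs; gy; sp].
rewrite (sigmaE q_gt0 k) AseqSE // deltaE //.
have A_ge0 := Aseq_ge0 q_gt0 k; have qA_ge0 := qAseq_ge0 q_gt0 k.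
have AE : Aseq (mu / L) k = Num.sqrt (1 + Aseq (mu / L) k) ^+ 2 - 1.
  by rewrite sqr_sqrtr ?addr_ge0 //; ring.
have b_sqr : Num.sqrt (1 + mu / L * Aseq (mu / L) k) ^+ 2 = 1 + mu / L * Aseq (mu / L) k.
  by rewrite sqr_sqrtr ?addr_ge0.
have := sqrt_qAseq_le q_gt0 q_lt1 k; have := sqrt_qAseq_ge1 q_gt0 k.
move: (Num.sqrt (1 + Aseq (mu / L) k)) (Num.sqrt (1 + mu / L * Aseq (mu / L) k)) AE b_sqr.
move=> a b AE b_sqr b_ge1 a_ge_b; rewrite AE in b_sqr *.
(* Eliminating mu through b^2 - 1 = mu / L * (a^2 - 1) makes the identity rational
   in a and b; this needs a <> 1, and a = 1 forces b = 1. *)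
have [a1|a_neq1] := eqVneq a 1.
- have b1 : b = 1.
    by apply/eqP; rewrite eq_le b_ge1 andbT; move: b_sqr; rewrite a1; nra.
  rewrite a1 b1; field.
  by repeat (apply/andP; split); apply: lt0r_neq0; lra.
- have a_gt1 : 1 < a by rewrite lt_neqAle eq_sym a_neq1 (le_trans b_ge1).
  have a2_gt0 : 0 < a ^+ 2 - 1 by nra.
  have b2_lt : b ^+ 2 - 1 < a ^+ 2 - 1 by rewrite b_sqr; nra.
  have -> : mu = L * (b ^+ 2 - 1) / (a ^+ 2 - 1).
    by rewrite b_sqr; field; rewrite !lt0r_neq0.
  field.
  by repeat (apply/andP; split); apply: lt0r_neq0; nra.
Qed.
End LyapunovIdentity.

Lemma ler_of_residual_identity (R : realDomainType) (v1 v0 p1 p2 p3 p4 p5 c1 n1 c2 n2 : R) :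
  v1 - v0 + p1 + p2 + p3 + p4 + p5 = - c1 * n1 - c2 * n2 ->
  0 <= p1 -> 0 <= p2 -> 0 <= p3 -> 0 <= p4 -> 0 <= p5 ->
  0 <= c1 -> 0 <= n1 -> 0 <= c2 -> 0 <= n2 -> v1 <= v0.
Proof. by move=> E *; nra. Qed.

Section ProxITEM.
Variables (R : realType) (V : lmodType R) (ip : V -> V -> R).
Hypothesis ip_inner : is_inner_product ip.
Variables (mu L : R) (f : V -> R) (gradf : V -> V) (g : V -> \bar R).
Variables (xstar : V) (x z zbar y : nat -> V).
Hypotheses (mu_gt0 : 0 < mu) (mu_lt_L : mu < L).
Hypothesis f_sc : strongly_convex ip mu f.
Hypothesis f_smooth : L_smooth ip L f gradf.
Hypotheses (g_convex : econvex g) (g_proper : eproper g).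
Hypothesis xstar_min : forall w, ((f xstar)%:E + g xstar <= (f w)%:E + g w)%E.
Hypothesis y_def : forall k,
  y k = (1 - beta (mu / L) k) *: z k + beta (mu / L) k *: x k.
Hypothesis zbar_def : forall k,
  zbar k.+1 = (1 - mu / L * delta (mu / L) k) *: z k
              + (mu / L * delta (mu / L) k) *: y k - (delta (mu / L) k / L) *: gradf (y k).
Hypothesis z_prox : forall k, is_prox ip g (delta (mu / L) k / L) (zbar k.+1) (z k.+1).
Hypothesis x_def : forall k,
  x k.+1 = y k - L^-1 *: gradf (y k) - (delta (mu / L) k)^-1 *: (zbar k.+1 - z k.+1).

Let L_gt0 : 0 < L. Proof. exact: lt_trans mu_lt_L. Qed.
Let q_gt0 : 0 < mu / L. Proof. exact: divr_gt0. Qed.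
Let q_lt1 : mu / L < 1. Proof. by rewrite ltr_pdivrMr // mul1r. Qed.
Let step_gt0 k : 0 < delta (mu / L) k. Proof. exact: delta_gt0. Qed.

Lemma g_xstar_fin : g xstar \is a fin_num.
Proof.
have [g_ninfty [w gw_lt]] := g_proper; rewrite fin_numE g_ninfty /=.
apply: contraTneq (xstar_min w) => ->.
by move: gw_lt (g_ninfty w); case: (g w).
Qed.

Lemma g_z_fin k : g (z k.+1) \is a fin_num.
Proof.
have [g_ninfty _] := g_proper; rewrite fin_numE g_ninfty /=.
apply: contraTneq (z_prox k xstar) => ->.
by move: g_xstar_fin; rewrite fin_numE; case: (g xstar).
Qed.

Lemma sg_S k : sg (mu / L) L zbar z k.+1 = (L / delta (mu / L) k) *: (zbar k.+1 - z k.+1).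
Proof. by rewrite /sg (maxn_idPl _). Qed.

Lemma sg_subgrad k w : g w \is a fin_num ->
  0 <= Ig_fin ip (fine \o g) w (z k.+1) (sg (mu / L) L zbar z k.+1).
Proof.
move=> gw_fin; rewrite sg_S -invf_div.
exact: prox_subgrad (divr_gt0 (step_gt0 k) L_gt0) (z_prox k) (g_z_fin k) gw_fin.
Qed.

Lemma VkE k : Vk ip mu L f gradf g xstar zbar z y k =
  (lyap ip mu L f gradf (fine \o g) (Aseq (mu / L) k) (sigma (mu / L) k)
     xstar (yprev y k) (z k) (sg (mu / L) L zbar z k))%:E.
Proof.
(* At k = 0 both [Ig] terms have weight 0, so [g (z 0)] may be infinite. *)
rewrite /Vk /lyap; case: k => [|k].
  by rewrite sigma0 /= !(mulr0, mul0r, subrr, addr0, add0r, mul0e).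
by rewrite !IgE ?g_z_fin ?g_xstar_fin // -!EFinM -!EFinD.
Qed.

Lemma y_momentum k :
  y k = (1 - beta (mu / L) k) *: z k
        + beta (mu / L) k *: (yprev y k - L^-1 *: (gradf (yprev y k) + sg (mu / L) L zbar z k)).
Proof.
rewrite y_def; congr (_ + _); case: k => [|k]; first by rewrite /beta /= !mul0r !scale0r.
congr (_ *: _); rewrite x_def sg_S /yprev /=.
by rewrite [L^-1 *: (_ + _)]scalerDr scalerA mulrA mulVf ?gt_eqF // mul1r opprD addrA.
Qed.

Lemma z_step k :
  z k.+1 = (1 - mu / L * delta (mu / L) k) *: z k + (mu / L * delta (mu / L) k) *: y k
           - (delta (mu / L) k / L) *: gradf (y k)
           - (delta (mu / L) k / L) *: sg (mu / L) L zbar z k.+1.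
Proof.
rewrite -zbar_def sg_S scalerA.
have -> : delta (mu / L) k / L * (L / delta (mu / L) k) = 1.
  by field; rewrite !lt0r_neq0.
by rewrite scale1r opprB subrKC.
Qed.

Lemma sigma_Ig_ge0 k :
  0 <= (sigma (mu / L) k - 1) * Ig_fin ip (fine \o g) (z k.+1) (z k) (sg (mu / L) L zbar z k).
Proof.
case: k => [|k]; first by rewrite sigma0 subrr mul0r.
apply: mulr_ge0; last exact: sg_subgrad (g_z_fin _).
by rewrite subr_ge0 sigma_ge1.
Qed.

Lemma Vk_nonincreasing k :
  (Vk ip mu L f gradf g xstar zbar z y k.+1 <= Vk ip mu L f gradf g xstar zbar z y k)%E.
Proof.
have A_ge0 := Aseq_ge0 q_gt0 k; have A_le := Aseq_leS q_gt0 q_lt1 k.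
have sigma_le := sigma_leS q_gt0 q_lt1 k.
have If_nonneg := If_ge0 ip_inner mu_gt0 mu_lt_L f_sc f_smooth.
rewrite !VkE lee_fin -[yprev y k.+1]/(y k).
have E := lyap_step_identity ip_inner f (fine \o g) xstar mu_gt0 mu_lt_L (y_momentum k) (z_step k).
apply: (ler_of_residual_identity E).
- by rewrite !mulr_ge0 // subr_ge0 ltW.
- by rewrite !mulr_ge0 // subr_ge0 // ltW.
- exact: sigma_Ig_ge0.
- apply: mulr_ge0; first lra.
  apply: (opt_subgrad ip_inner mu_gt0 f_sc f_smooth g_convex xstar_min g_xstar_fin).
  exact: g_z_fin.
- by apply: mulr_ge0; [rewrite subr_ge0 | apply: sg_subgrad; exact: g_xstar_fin].
- by rewrite divr_ge0 // mulr_ge0 // ltW.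
- exact: nsq_ge0.
- by rewrite divr_ge0 ?subr_ge0 // mulr_ge0 // ltW.
- exact: nsq_ge0.
Qed.
End ProxITEM.

Unset Implicit Arguments.
Set Strict Implicit.

Theorem lemma2 (R : realType) (V : lmodType R) (ip : V -> V -> R)
    (mu L : R) (f : V -> R) (gradf : V -> V) (g : V -> \bar R)
    (xstar x0 : V) (x z zbar y : nat -> V) :
  is_hilbert ip ->
  0 < mu -> mu < L ->
  strongly_convex ip mu f ->
  L_smooth ip L f gradf ->
  econvex g -> eproper g -> elsc ip g ->
  (forall w : V, ((f xstar)%:E + g xstar <= (f w)%:E + g w)%E) ->
  x 0%N = x0 ->
  z 0%N = x0 ->
  (forall k : nat,
      y k = (1 - beta (mu / L) k) *: z k + beta (mu / L) k *: x k) ->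
  (forall k : nat,
      zbar k.+1 = (1 - mu / L * delta (mu / L) k) *: z k
                  + (mu / L * delta (mu / L) k) *: y k
                  - (delta (mu / L) k / L) *: gradf (y k)) ->
  (forall k : nat, is_prox ip g (delta (mu / L) k / L) (zbar k.+1) (z k.+1)) ->
  (forall k : nat,
      x k.+1 = y k - L^-1 *: gradf (y k)
               - (delta (mu / L) k)^-1 *: (zbar k.+1 - z k.+1)) ->
  forall k : nat,
    (Vk ip mu L f gradf g xstar zbar z y k.+1
       <= Vk ip mu L f gradf g xstar zbar z y k)%E.
Proof.
move=> [ip_inner _] mu_gt0 mu_lt_L f_sc f_smooth g_convex g_proper _ xstar_min _ _.
move=> y_def zbar_def z_prox x_def k.
by apply: Vk_nonincreasing.
Qed.
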